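(* Let $n$ and $k$ be integers with $2 \leq k \leq n-2$, and let $M$ be the positroid on ground set $[n]$ of rank $k$ with Grassmann necklace $(I_1, I_2, \dots, I_n)$. Then $M$ is a sparse paving matroid if and only if for every $i \in [n]$, $I_i \neq C_{k,n}^{(i)}$ implies that $I_{i-1} = C_{k,n}^{(i-1)}$, $I_{i+1} = C_{k,n}^{(i+1)}$, and $I_i = (C_{k,n}^{(i)} \setminus \{i + k - 1\}) \cup \{i+k\}$ (all indices and elements computed modulo $n$ with representatives in $[n]$). Moreover, in this case, the set of circuit-hyperplanes of $M$ consists precisely of the sets $C_{k,n}^{(i)}$ for those $i\in[n]$ with $I_i \neq C_{k,n}^{(i)}$.
   Context: For $t\in[n]$, the order $<_t$ on $[n]$ is $t <_t t+1 <_t \cdots <_t n <_t 1 <_t \cdots <_t t-1$. For $k$-subsets $I=\{a_1<_t\cdots<_t a_k\}$ and $J=\{b_1<_t\cdots<_t b_k\}$ of $[n]$, write $I\leq_t J$ if $a_i\leq_t b_i$ for all $i$. A Grassmann necklace is a sequence $(I_1,\dots,I_n)$ of $k$-subsets of $[n]$ such that (indices modulo $n$) if $i\in I_i$ then $I_{i+1}=(I_i\setminus\{i\})\cup\{j\}$ for some $j\in[n]$, and if $i\notin I_i$ then $I_{i+1}=I_i$. The positroid with Grassmann necklace $(I_1,\dots,I_n)$ is the matroid on $[n]$ whose set of bases is $\bigcap_{t=1}^n\{J\in\binom{[n]}{k}: I_t\leq_t J\}$; equivalently, for a positroid $M$ of rank $k$, $I_t$ is the $\leq_t$-minimal basis of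 $M$. For $i\in[n]$, $C_{k,n}^{(i)}=\{i,i+1,\dots,i+k-1\}$ computed modulo $n$ with representatives in $[n]$ (the cyclic interval of size $k$ starting at $i$). A matroid of rank $k$ is paving if every circuit has cardinality at least $k$, and sparse paving if both it and its dual are paving. A circuit-hyperplane is a set that is both a circuit and a hyperplane. *)

(* Ground set [n] is encoded as 'I_n: the ordinal j stands
   for the element j+1 of [n]; likewise indices i in [n] are 'I_n. *)
From mathcomp Require Import all_boot.
Set Implicit Arguments. Unset Strict Implicit. Unset Printing Implicit Defensive.

Section Defs.
Variable n : nat.

Lemma ord_pos (i : 'I_n) : 0 < n.
Proof. exact: leq_ltn_trans (leq0n i) (ltn_ord i). Qed.

Definition shift (i : 'I_n) (m : nat) : 'I_n :=
  Ordinal (ltn_pmod (i + m) (ord_pos i)).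
Definition csucc (i : 'I_n) : 'I_n := shift i 1.
Definition cpred (i : 'I_n) : 'I_n := shift i (n - 1).

(* position of x in the cyclic order <_t starting at t *)
Definition tkey (t x : 'I_n) : nat := (x + n - t) %% n.
Definition tle (t : 'I_n) : rel 'I_n := fun x y => tkey t x <= tkey t y.
Definition tsorted (t : 'I_n) (A : {set 'I_n}) : seq 'I_n :=
  sort (tle t) (enum A).
Definition gale_le (t : 'I_n) (A B : {set 'I_n}) : bool :=
  (#|A| == #|B|) &&
  [forall i : 'I_#|A|,
     tle t (nth t (tsorted t A) i) (nth t (tsorted t B) i)].

Definition grassmann_necklace (k : nat) (I : 'I_n -> {set 'I_n}) : Prop :=
  (forall i, #|I i| = k) /\
  (forall i, if i \in I i then exists j, I (csucc i) = (I i :\ i) :|: [set j]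
             else I (csucc i) = I i).

Definition positroid_bases (k : nat) (I : 'I_n -> {set 'I_n})
  : {set {set 'I_n}} :=
  [set J : {set 'I_n} | (#|J| == k) && [forall t, gale_le t (I t) J]].

Definition cyc_int (k : nat) (i : 'I_n) : {set 'I_n} :=
  [set shift i m | m : 'I_k].

Variable B : {set {set 'I_n}}.
Definition indep (X : {set 'I_n}) : bool := [exists b in B, X \subset b].
Definition circuit (X : {set 'I_n}) : bool :=
  ~~ indep X && [forall Y : {set 'I_n}, (Y \proper X) ==> indep Y].
Definition mrank (X : {set 'I_n}) : nat := \max_(b in B) #|X :&: b|.
Definition flat (X : {set 'I_n}) : bool :=
  [forall e, (e \notin X) ==> (mrank X < mrank (e |: X))].
Definition hyperplane (X : {set 'I_n}) : bool :=
  flat X && (mrank X == (mrank [set: 'I_n]).-1).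
Definition circuit_hyperplane (X : {set 'I_n}) : bool :=
  circuit X && hyperplane X.
Definition paving : bool :=
  [forall C : {set 'I_n}, circuit C ==> (mrank [set: 'I_n] <= #|C|)].
End Defs.

Definition dual_bases n (B : {set {set 'I_n}}) : {set {set 'I_n}} :=
  [set ~: b | b in B].
Definition sparse_paving n (B : {set {set 'I_n}}) : bool :=
  paving B && paving (dual_bases B).

From mathcomp Require Import all_boot zify.
Set Implicit Arguments. Unset Strict Implicit. Unset Printing Implicit Defensive.

(* Let P_t(m) be the first m elements of [n] in the order <_t.  For sets of
   size k, Gale's criterion says that J is a basis iff |J ∩ P_t(m)| <=
   |I_t ∩ P_t(m)| for all t and m, and sparse paving means that every
   (k-1)-set is independent and every (k+1)-set spanning.  Testing these
   against P_t(k-1) and P_t(k+1) gives P_t(k-1) ⊆ I_t ⊆ P_t(k+1) whenever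
   I_t ≠ C^(t), i.e. I_t is the interval with its last element bumped by one;
   the necklace step then carries t+k from I_t into I_(t+1), which rules out a
   bumped I_(t+1), so the neighbours of a bumped index are intervals.
   Conversely, under this condition the bases are exactly the k-sets other
   than the intervals C^(i) with I_i bumped.  Such intervals start at least
   two steps apart, hence share at most k-2 elements, and a matroid whose
   non-basis k-sets pairwise meet in fewer than k-1 elements is sparse paving,
   with these k-sets as its circuit-hyperplanes. *)

Lemma exists_subset_card (T : finType) (A C : {set T}) m :
  A \subset C -> #|A| <= m <= #|C| ->
  exists2 D : {set T}, A \subset D & D \subset C /\ #|D| = m.
Proof.
move=> sAC; elim: m => [|m IH] /andP[leAm leCm].
  by exists A => //; split=> //; apply/eqP; rewrite -leqn0.
have [eqAm | ltAm] := eqVneq #|A| m.+1; first by exists A.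
have [|D sAD [sDC cardD]] := IH.
  by rewrite (ltnW leCm) andbT -ltnS ltn_neqAle ltAm leAm.
have /subsetPn[x xC xND] : ~~ (C \subset D).
  by apply: contraTN leCm => /subset_leq_card; rewrite cardD -ltnNge.
exists (x |: D); first exact: subset_trans sAD (subsetUr _ _).
by rewrite subUset sub1set xC sDC cardsU1 xND cardD.
Qed.

Lemma setI_card_subset (T : finType) (A B : {set T}) : #|A| <= #|A :&: B| -> A \subset B.
Proof. by move=> leA; apply/setIidPl/eqP; rewrite eqEcard subsetIl. Qed.

Lemma count_ltn_pointwise (a b : seq nat) m : size a = size b ->
  (forall i, i < size a -> nth 0 a i <= nth 0 b i) ->
  count (fun v => v < m) b <= count (fun v => v < m) a.
Proof.
elim: a b => [|x a IH] [|y b] //= [eq_size] le_ab.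
apply: leq_add; last by apply: IH => // i hi; apply: (le_ab i.+1).
by have := le_ab 0 isT; case: (ltnP y m) => // lt_ym le_xy; rewrite (leq_ltn_trans le_xy).
Qed.

Lemma pointwise_count_ltn (a b : seq nat) : size a = size b ->
  sorted leq a -> sorted leq b ->
  (forall m, count (fun v => v < m) b <= count (fun v => v < m) a) ->
  forall i, i < size a -> nth 0 a i <= nth 0 b i.
Proof.
move=> eq_size sort_a sort_b le_count i hi; rewrite leqNgt; apply/negP => lt_ba.
(* Below the threshold b_i + 1 lie the first i + 1 entries of b but at most i of a. *)
set m := (nth 0 b i).+1.
have count_drop_a : count (fun v => v < m) (drop i a) = 0.
  apply/eqP; rewrite -leqn0 leqNgt -has_count; apply/hasPn => _ /(nthP 0) [j hj <-].
  rewrite size_drop ltn_subRL in hj; rewrite nth_drop /m ltnS -ltnNge.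
  apply: leq_trans lt_ba _.
  by apply: (sorted_leq_nth leq_trans leqnn 0 sort_a); rewrite ?inE ?leq_addr.
have count_take_b : count (fun v => v < m) (take i.+1 b) = i.+1.
  have size_take_b : size (take i.+1 b) = i.+1 by rewrite size_take; case: ifP; lia.
  rewrite -{2}size_take_b; apply/eqP; rewrite -all_count.
  apply/allP => _ /(nthP 0) [j hj <-]; rewrite size_take_b in hj.
  rewrite nth_take // ltnS.
  by apply: (sorted_leq_nth leq_trans leqnn 0 sort_b); rewrite ?inE; lia.
have count_take_a : count (fun v => v < m) (take i a) <= i.
  by apply: leq_trans (count_size _ _) _; rewrite size_take; case: ifP; lia.
move: (le_count m).
rewrite -[a](cat_take_drop i) -[b](cat_take_drop i.+1) !count_cat.
by rewrite count_drop_a count_take_b; lia.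
Qed.

Section CyclicOrder.
Variable n : nat.
Implicit Types (i j t x : 'I_n) (A J : {set 'I_n}).

Lemma shift_add i a b : shift (shift i a) b = shift i (a + b).
Proof. by apply: val_inj => /=; rewrite modnDml addnA. Qed.

Lemma shiftDn i m : shift i (m + n) = shift i m.
Proof. by apply: val_inj => /=; rewrite addnA modnDr. Qed.

Lemma shift0 i : shift i 0 = i.
Proof. by apply: val_inj => /=; rewrite addn0 modn_small. Qed.

Lemma shiftn i : shift i n = i.
Proof. by have := shiftDn i 0; rewrite add0n shift0. Qed.

Lemma shift_eq i a b : a < n -> b < n -> (shift i a == shift i b) = (a == b).
Proof.
move=> ha hb; apply/eqP/eqP => [/(congr1 val) /= /eqP|-> //].
by rewrite eqn_modDl !modn_small // => /eqP.
Qed.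

Lemma tkey_lt t x : tkey t x < n.
Proof. exact: ltn_pmod (ord_pos t). Qed.

Lemma tkeyK t x : shift t (tkey t x) = x.
Proof.
apply: val_inj => /=; rewrite /tkey modnDmr subnKC; last first.
  exact: leq_trans (ltnW (ltn_ord t)) (leq_addl _ _).
by rewrite modnDr modn_small.
Qed.

Lemma tkey_shift t m : m < n -> tkey t (shift t m) = m.
Proof.
by move=> hm; apply/eqP; rewrite -(shift_eq t (tkey_lt _ _) hm) tkeyK.
Qed.

Lemma csucc_cpred i : csucc (cpred i) = i.
Proof. by rewrite /csucc /cpred shift_add subnK ?shiftn // (ord_pos i). Qed.

Lemma shift_rebase i j a : a < tkey i j ->
  shift i a = shift j (a + n - tkey i j).
Proof.
move=> lt_a; have := tkey_lt i j; set d := tkey i j in lt_a * => lt_d.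
have -> : j = shift i d by rewrite tkeyK.
by rewrite shift_add -(shiftDn i a); congr shift; lia.
Qed.

Definition tprefix t m := [set x | tkey t x < m].
Definition tcount t A m : nat := #|A :&: tprefix t m|.

Lemma in_tprefix t m x : (x \in tprefix t m) = (tkey t x < m).
Proof. by rewrite inE. Qed.

Lemma shift_in_tprefix t m a : a < n -> (shift t a \in tprefix t m) = (a < m).
Proof. by move=> ha; rewrite in_tprefix tkey_shift. Qed.

Lemma tprefix_imset t m : m <= n -> tprefix t m = [set shift t (val j) | j : 'I_m].
Proof.
move=> hm; apply/setP => x; rewrite in_tprefix; apply/idP/imsetP => [lt_x|[j _ ->]].
  by exists (Ordinal lt_x); rewrite ?tkeyK.
by rewrite tkey_shift ?ltn_ord // (leq_trans (ltn_ord j)).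
Qed.

Lemma card_tprefix t m : m <= n -> #|tprefix t m| = m.
Proof.
move=> hm; rewrite tprefix_imset // card_imset ?card_ord // => a b /eqP.
by rewrite shift_eq ?(leq_trans (ltn_ord _) hm) // => /eqP /val_inj.
Qed.

Lemma card_tprefix_leq t m : #|tprefix t m| <= m.
Proof.
case: (leqP m n) => [le_mn | lt_nm]; first by rewrite card_tprefix.
by apply: leq_trans (max_card _) _; rewrite card_ord ltnW.
Qed.

Lemma tprefixI t m1 m2 : tprefix t m1 :&: tprefix t m2 = tprefix t (minn m1 m2).
Proof. by apply/setP => x; rewrite !inE leq_min. Qed.

Lemma cyc_int_tprefix k t : k <= n -> cyc_int k t = tprefix t k.
Proof. by move=> hk; rewrite tprefix_imset. Qed.

(* Witnesses: the last two elements of [tprefix i k] that precede [j]. *)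
Lemma card_tprefix_meet i j k : 2 <= k <= n - 2 -> 2 <= tkey i j <= n - 2 ->
  #|tprefix i k :&: tprefix j k| <= k - 2.
Proof.
move=> /andP[k_ge2 k_le] /andP[d_ge2 d_le].
have outside b : b < tkey i j -> tkey i j - b <= n - k -> shift i b \notin tprefix j k.
  move=> lt_bd le_bk; rewrite (shift_rebase lt_bd) shift_in_tprefix; lia.
have [a [a_gt0 a_lt_k a_out a1_out]] : exists a,
    [/\ 0 < a, a < k, shift i a \notin tprefix j k & shift i a.-1 \notin tprefix j k].
  by exists (minn (tkey i j) k - 1); split; try apply: outside; lia.
have sub : tprefix i k :&: tprefix j k \subset tprefix i k :\ shift i a :\ shift i a.-1.
  apply/subsetP => x /setIP[xi xj]; rewrite !in_setD1 xi andbT.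
  by apply/andP; split; apply: (contraTneq _ xj) => ->.
have ne_a : shift i a.-1 != shift i a by rewrite shift_eq; lia.
have a1_lt_k : a.-1 < k by lia.
have := cardsD1 (shift i a) (tprefix i k).
have := cardsD1 (shift i a.-1) (tprefix i k :\ shift i a).
have := subset_leq_card sub.
by rewrite card_tprefix ?in_setD1 ?shift_in_tprefix ?ne_a ?a_lt_k ?a1_lt_k //=; lia.
Qed.

Lemma tcount_leq_card t A m : tcount t A m <= #|A|.
Proof. exact/subset_leq_card/subsetIl. Qed.

Lemma tcount_leq_min t J m : tcount t J m <= minn m #|J|.
Proof.
rewrite leq_min tcount_leq_card andbT.
exact: leq_trans (subset_leq_card (subsetIr _ _)) (card_tprefix_leq t m).
Qed.

Lemma tcount_tprefix t m m' : m' <= n -> tcount t (tprefix t m') m = minn m m'.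
Proof.
by move=> le_mn; rewrite /tcount tprefixI minnC card_tprefix // (leq_trans (geq_minr _ _)).
Qed.

End CyclicOrder.

Section GaleOrder.
Variable n : nat.
Implicit Types (t : 'I_n) (A J : {set 'I_n}).

Definition tkeys t A : seq nat := map (tkey t) (tsorted t A).

Lemma size_tkeys t A : size (tkeys t A) = #|A|.
Proof. by rewrite size_map size_sort cardE. Qed.

Lemma sorted_tkeys t A : sorted leq (tkeys t A).
Proof. by rewrite sorted_map; apply: sort_sorted => x y; apply: leq_total. Qed.

Lemma count_tkeys t A m : count (fun v => v < m) (tkeys t A) = tcount t A m.
Proof.
rewrite count_map /tsorted (permP (permEl (perm_sort _ _))) -size_filter.
rewrite -(card_uniqP (filter_uniq _ (enum_uniq _))).
by apply: eq_card => x; rewrite mem_filter mem_enum !inE andbC.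
Qed.

Lemma nth_tkeys t A i : i < #|A| -> nth 0 (tkeys t A) i = tkey t (nth t (tsorted t A) i).
Proof.
move=> hi; rewrite -[0](tkey_shift t (ord_pos t)) shift0 (nth_map t) //.
by rewrite size_sort -cardE.
Qed.

Lemma gale_leE t A J : #|A| = #|J| ->
  gale_le t A J <-> (forall m, tcount t J m <= tcount t A m).
Proof.
move=> eq_card; rewrite /gale_le eq_card eqxx /=; split.
- move=> /forallP le_AJ m; rewrite -!count_tkeys; apply: count_ltn_pointwise.
    by rewrite !size_tkeys.
  move=> i; rewrite size_tkeys => hi.
  have hiJ : i < #|J| by rewrite -eq_card.
  by have := le_AJ (Ordinal hiJ); rewrite /tle -!nth_tkeys // eq_card.
- move=> le_count; apply/forallP => i.
  have hiA : (i : nat) < #|A| by rewrite eq_card.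
  rewrite /tle -(nth_tkeys _ hiA) -(nth_tkeys _ (ltn_ord i)).
  apply: pointwise_count_ltn; rewrite ?size_tkeys ?sorted_tkeys //.
  by move=> m; rewrite !count_tkeys.
Qed.

End GaleOrder.

Section BasisSystem.
Variables (n : nat) (B : {set {set 'I_n}}).
Implicit Types (X Y U b : {set 'I_n}).

Definition spanning U : bool := [exists b in B, b \subset U].

Lemma indepP X : reflect (exists2 b, b \in B & X \subset b) (indep B X).
Proof. exact: (iffP exists_inP). Qed.

Lemma spanningP U : reflect (exists2 b, b \in B & b \subset U) (spanning U).
Proof. exact: (iffP exists_inP). Qed.

Lemma indep_dual X : indep (dual_bases B) X = spanning (~: X).
Proof.
apply/exists_inP/spanningP => [[_ /imsetP[b bB ->]]|[b bB]]; rewrite subsetC => sbX.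
  by exists b.
by exists (~: b); rewrite ?imset_f.
Qed.

Lemma leq_mrank X b : b \in B -> #|X :&: b| <= mrank B X.
Proof. by move=> bB; apply: (leq_bigmax_cond (F := fun b => #|X :&: b|)). Qed.

Lemma mrank_leq X m : (forall b, b \in B -> #|X :&: b| <= m) -> mrank B X <= m.
Proof. by move=> leXm; apply/bigmax_leqP. Qed.

Lemma circuit_minimal_dependent X : ~~ indep B X ->
  exists2 C : {set 'I_n}, C \subset X & circuit B C.
Proof.
move=> depX.
have [C /minsetP[/= depC minC] sCX] := @minset_exists _ [pred Y | ~~ indep B Y] X depX.
exists C => //; rewrite /circuit (negbTE depC) /=; apply/forallP => Y; apply/implyP => ltYC.
apply: contraT => depY; have eqYC := minC Y depY (proper_sub ltYC).
by rewrite eqYC properxx in ltYC.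
Qed.

Lemma pavingP : paving B <-> (forall X, #|X| < mrank B setT -> indep B X).
Proof.
split=> [/forallP paveB X ltX | indep_small].
  apply: contraT => /circuit_minimal_dependent [C sCX circC].
  have := implyP (paveB C) circC.
  by rewrite leqNgt (leq_ltn_trans (subset_leq_card sCX) ltX).
apply/forallP => C; apply/implyP => /andP[depC _].
by rewrite leqNgt; apply: contra depC; apply: indep_small.
Qed.

Variable k : nat.
Hypothesis card_bases : forall b, b \in B -> #|b| = k.
Hypothesis bases_neq0 : B != set0.

Lemma mrank_leqk X : mrank B X <= k.
Proof. by apply: mrank_leq => b bB; rewrite -(card_bases bB) subset_leq_card ?subsetIr. Qed.

Lemma spanning_mrank U : spanning U -> mrank B U = k.
Proof.
case/spanningP => b bB sbU; apply/eqP; rewrite eqn_leq mrank_leqk.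
by rewrite -(card_bases bB) -(setIidPr sbU) leq_mrank.
Qed.

Lemma mrank_setT : mrank B setT = k.
Proof.
by have /set0Pn[b bB] := bases_neq0; apply: spanning_mrank; apply/spanningP; exists b.
Qed.

End BasisSystem.

Section SparsePavingBases.
Variables (n k : nat) (B : {set {set 'I_n}}).
Implicit Types (X Y U : {set 'I_n}).
Hypothesis card_bases : forall b, b \in B -> #|b| = k.
Hypothesis bases_neq0 : B != set0.

Lemma mrank_dual_setT : mrank (dual_bases B) setT = n - k.
Proof.
apply: mrank_setT; last first.
  by have /set0Pn[b bB] := bases_neq0; apply/set0Pn; exists (~: b); rewrite imset_f.
by move=> _ /imsetP[b bB ->]; move: (cardsC b); rewrite card_ord card_bases //; lia.
Qed.

Lemma sparse_pavingE : sparse_paving B <->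
  (forall X, #|X| < k -> indep B X) /\ (forall U, k < #|U| -> spanning B U).
Proof.
rewrite /sparse_paving; split=> [/andP[/pavingP paveB /pavingP paveD] | [smallI largeS]].
  split=> [X | U ltU]; first by rewrite -(mrank_setT card_bases bases_neq0); apply: paveB.
  rewrite -[U]setCK -indep_dual; apply: paveD.
  by rewrite mrank_dual_setT; move: (cardsC U); rewrite card_ord; lia.
apply/andP; split; apply/pavingP => X.
  by rewrite (mrank_setT card_bases bases_neq0); apply: smallI.
rewrite mrank_dual_setT indep_dual => ltX; apply: largeS.
by move: (cardsC X); rewrite card_ord; lia.
Qed.

Section SparsePaving.
Hypothesis k_gt0 : 0 < k.
Hypothesis indep_small : forall X, #|X| < k -> indep B X.
Hypothesis spanning_large : forall U, k < #|U| -> spanning B U.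

Lemma dependent_of_nonbasis X : #|X| = k -> X \notin B -> ~~ indep B X.
Proof.
move=> cardX XNB; apply/negP => /indepP[b bB sXb].
suff eqXb : X = b by rewrite eqXb bB in XNB.
by apply/eqP; rewrite eqEcard sXb cardX (card_bases bB) leqnn.
Qed.

Lemma mrank_nonbasis X : #|X| = k -> X \notin B -> mrank B X = k.-1.
Proof.
move=> cardX XNB; apply/eqP; rewrite eqn_leq; apply/andP; split.
  apply: mrank_leq => b bB; rewrite -ltnS prednK // ltn_neqAle.
  rewrite -cardX subset_leq_card ?subsetIl // andbT.
  apply: contra (dependent_of_nonbasis cardX XNB).
  move=> /eqP eq_card; apply/indepP; exists b => //.
  by apply: setI_card_subset; rewrite eq_card.
have /card_gt0P[x xX] : 0 < #|X| by rewrite cardX.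
have /indepP[b bB sXb] : indep B (X :\ x).
  by apply: indep_small; rewrite -cardX (cardsD1 x X) xX.
apply: leq_trans (leq_mrank _ bB); rewrite -cardX (cardsD1 x X) xX /=.
by rewrite subset_leq_card // subsetI subD1set.
Qed.

Lemma circuit_hyperplaneE X : circuit_hyperplane B X <-> #|X| = k /\ X \notin B.
Proof.
rewrite /circuit_hyperplane /circuit /hyperplane (mrank_setT card_bases bases_neq0); split.
  case/andP => /andP[depX _] /andP[_ /eqP rankX].
  have geX : k <= #|X| by rewrite leqNgt; apply: contra depX; apply: indep_small.
  have leX : #|X| <= k.
    rewrite leqNgt; apply/negP => /spanning_large/(spanning_mrank card_bases).
    by rewrite rankX; lia.
  split; first by apply/eqP; rewrite eqn_leq leX.
  by apply: contra depX => XB; apply/indepP; exists X.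
case=> cardX XNB; rewrite dependent_of_nonbasis // mrank_nonbasis // eqxx andbT /=.
apply/andP; split.
  apply/forallP => Y; apply/implyP => ltYX; apply: indep_small.
  by rewrite -cardX proper_card.
apply/forallP => e; apply/implyP => eNX.
have spanning_eX : spanning B (e |: X) by apply: spanning_large; rewrite cardsU1 eNX cardX.
by rewrite (spanning_mrank card_bases spanning_eX) mrank_nonbasis // ltn_predL.
Qed.

End SparsePaving.

Section NonbasesFar.
Hypothesis nonbases_far : forall X Y, #|X| = k -> #|Y| = k -> X \notin B -> Y \notin B ->
  X != Y -> #|X :&: Y| < k.-1.

Lemma basis_of_adjacent X Y x : #|X| = k -> #|Y| = k -> x \in X -> x \notin Y ->
  k.-1 <= #|X :&: Y| -> (X \in B) || (Y \in B).
Proof.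
move=> cardX cardY xX xNY leXY; apply: contraT; rewrite negb_or => /andP[XNB YNB].
have neXY : X != Y by apply: contraNneq xNY => <-.
by rewrite leqNgt nonbases_far in leXY.
Qed.

Lemma sparse_paving_of_nonbases_far : 0 < k -> k < n -> sparse_paving B.
Proof.
move=> k_gt0 lt_kn; apply/sparse_pavingE; split=> [X ltX | U ltU].
  have [|X' sXX' [_ cardX']] := @exists_subset_card _ X setT k.-1 (subsetT X).
    by rewrite cardsT card_ord; lia.
  have /card_gt1P[e [f [eN fN neef]]] : 1 < #|~: X'|.
    by move: (cardsC X'); rewrite card_ord cardX'; lia.
  rewrite !inE in eN fN.
  have card_add x : x \notin X' -> #|x |: X'| = k.
    by move=> xN; rewrite cardsU1 xN cardX' add1n prednK.
  have eNfX' : e \notin f |: X' by rewrite !inE negb_or neef.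
  have meet : k.-1 <= #|(e |: X') :&: (f |: X')|.
    by rewrite -cardX' subset_leq_card // subsetI !subsetUr.
  have indep_of x : x |: X' \in B -> indep B X.
    by move=> xB; apply/indepP; exists (x |: X'); last exact: subset_trans sXX' (subsetUr _ _).
  by have /orP[/indep_of|/indep_of] :=
    basis_of_adjacent (card_add e eN) (card_add f fN) (setU11 e X') eNfX' meet.
have [|U' _ [sU'U cardU']] := @exists_subset_card _ set0 U k.+1 (sub0set U).
  by rewrite cards0.
have /card_gt1P[y [z [yU' zU' neyz]]] : 1 < #|U'| by rewrite cardU'.
have card_del x : x \in U' -> #|U' :\ x| = k.
  by move=> xU'; move: cardU'; rewrite (cardsD1 x U') xU'; lia.
have zU'y : z \in U' :\ y by rewrite !inE eq_sym neyz.
have meet : k.-1 <= #|(U' :\ y) :&: (U' :\ z)|.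
  have card_del2 : #|U' :\ y :\ z| = k.-1.
    by move: (card_del y yU'); rewrite (cardsD1 z (U' :\ y)) zU'y; lia.
  rewrite -card_del2 subset_leq_card // subsetI subD1set.
  by apply/subsetP => x; rewrite !inE => /and3P[-> _ ->].
have zNU'z : z \notin U' :\ z by rewrite setD11.
have spanning_of x : U' :\ x \in B -> spanning B U.
  by move=> xB; apply/spanningP; exists (U' :\ x); last exact: subset_trans (subD1set _ _) sU'U.
by have /orP[/spanning_of|/spanning_of] :=
  basis_of_adjacent (card_del y yU') (card_del z zU') zU'y zNU'z meet.
Qed.

End NonbasesFar.

End SparsePavingBases.

Section Necklace.
Variables (n k : nat) (I : 'I_n -> {set 'I_n}).
Hypothesis necklaceI : grassmann_necklace k I.
Implicit Types (i j s t x : 'I_n) (J X : {set 'I_n}).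

Local Notation Bs := (positroid_bases k I).

Let card_I i : #|I i| = k.
Proof. by case: necklaceI => ->. Qed.

Let I_csucc i : if i \in I i then exists j, I (csucc i) = I i :\ i :|: [set j]
                else I (csucc i) = I i.
Proof. by case: necklaceI => _; apply. Qed.

Lemma necklace_mem_shift x a e : a \in I x -> (forall d, d < e -> shift x d != a) ->
  a \in I (shift x e).
Proof.
move=> aI; elim: e => [|e IH] avoid; first by rewrite shift0.
have aIe : a \in I (shift x e) by apply: IH => d lt_de; apply/avoid/ltnW.
rewrite -addn1 -shift_add; have := I_csucc (shift x e); case: ifP => _; last by move=> ->.
by case=> j ->; rewrite !inE aIe eq_sym avoid.
Qed.

(* If m <= tkey t s, the walk from s to t never reaches (hence never removes)
   an element of the prefix; otherwise the walk from t to s never reaches an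
   element outside it. *)
Lemma necklace_tcount_min t s m : tcount t (I s) m <= tcount t (I t) m.
Proof.
have := tkey_lt t s; have := tkeyK t s; set d := tkey t s => def_s lt_dn.
case: (leqP m d) => [le_md | lt_dm].
  apply/subset_leq_card/subsetP => x /setIP[xIs xP]; rewrite inE xP andbT.
  have -> : t = shift s (n - d) by rewrite -def_s shift_add subnKC ?(ltnW lt_dn) ?shiftn.
  apply: necklace_mem_shift => // d' lt_d'; rewrite -def_s shift_add.
  apply: contraTneq xP => <-; rewrite shift_in_tprefix; lia.
have sub : I t :\: tprefix t m \subset I s :\: tprefix t m.
  apply/subsetP => x /setDP[xIt xNP]; rewrite in_setD xNP -def_s.
  apply: necklace_mem_shift => // d' lt_d'; apply: contraNneq xNP => <-.
  rewrite shift_in_tprefix; lia.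
rewrite /tcount -(leq_add2r #|I s :\: tprefix t m|) cardsID card_I -(card_I t).
by rewrite -(cardsID (tprefix t m) (I t)) leq_add2l subset_leq_card.
Qed.

Lemma positroid_basesP J :
  J \in Bs <-> #|J| = k /\ forall t m, tcount t J m <= tcount t (I t) m.
Proof.
rewrite inE; split=> [/andP[/eqP cardJ /forallP galeJ] | [cardJ le_count]].
  by split=> // t; apply/gale_leE; rewrite ?card_I.
by rewrite cardJ eqxx; apply/forallP => t; apply/gale_leE; rewrite ?card_I.
Qed.

Lemma necklace_basis s : I s \in Bs.
Proof. by apply/positroid_basesP; split=> // t m; apply: necklace_tcount_min. Qed.

Lemma card_positroid_basis J : J \in Bs -> #|J| = k.
Proof. by case/positroid_basesP. Qed.

Lemma positroid_bases_neq0 : 0 < n -> Bs != set0.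
Proof.
by move=> n_gt0; apply/set0Pn; exists (I (Ordinal n_gt0)); exact: necklace_basis.
Qed.

End Necklace.

Definition bumped_interval n k (i : 'I_n) : {set 'I_n} :=
  cyc_int k i :\ shift i (k - 1) :|: [set shift i k].

Definition necklace_condition n k (I : 'I_n -> {set 'I_n}) : Prop :=
  forall i, I i != cyc_int k i ->
    [/\ I (cpred i) = cyc_int k (cpred i), I (csucc i) = cyc_int k (csucc i)
      & I i = bumped_interval k i].

Section BumpedInterval.
Variables (n k : nat).
Hypotheses (k_gt0 : 0 < k) (lt_kn : k < n).
Implicit Types (t x : 'I_n) (J : {set 'I_n}).

Lemma in_bumped t x : (x \in bumped_interval k t) = (tkey t x < k - 1) || (x == shift t k).
Proof.
rewrite /bumped_interval cyc_int_tprefix ?(ltnW lt_kn) // !inE; congr (_ || _).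
have lt_k1n : k - 1 < n by lia.
rewrite -{1}(tkeyK t x) (shift_eq t (tkey_lt t x) lt_k1n).
by have := tkey_lt t x; case: (tkey t x =P k - 1) => /= [->|]; lia.
Qed.

Lemma card_bumped t : #|bumped_interval k t| = k.
Proof.
have -> : bumped_interval k t = shift t k |: tprefix t (k - 1).
  by apply/setP => x; rewrite in_bumped !inE orbC.
by rewrite cardsU1 card_tprefix ?shift_in_tprefix //; lia.
Qed.

Lemma tcount_bumped_lt t : tcount t (bumped_interval k t) k < k.
Proof.
have sub : bumped_interval k t :&: tprefix t k \subset tprefix t (k - 1).
  apply/subsetP => x; rewrite in_setI in_bumped !in_tprefix.
  by case: eqP => [->|]; rewrite ?tkey_shift //; lia.
by apply: leq_ltn_trans (subset_leq_card sub) _; rewrite card_tprefix; lia.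
Qed.

Lemma tcount_bumped_max t J m : #|J| = k -> J != tprefix t k ->
  tcount t J m <= tcount t (bumped_interval k t) m.
Proof.
move=> cardJ neJ; have := tcount_leq_min t J m; rewrite cardJ => le_J.
have prefix_sub m' : m' <= k - 1 -> m' <= m -> m' <= tcount t (bumped_interval k t) m.
  move=> le_m'k le_m'm; rewrite -{1}(card_tprefix t (m := m')); last by lia.
  by apply/subset_leq_card/subsetP => x; rewrite in_setI in_bumped !in_tprefix; lia.
have [lt_mk | le_km] := ltnP m k; first by apply: leq_trans le_J _; apply: prefix_sub; lia.
have [eq_mk | lt_km] := eqVneq m k.
  rewrite eq_mk in le_J prefix_sub *.
  apply: (leq_trans _ (prefix_sub (k - 1) (leqnn _) (leq_subr 1 k))).
  suff : tcount t J k != k by move: le_J; rewrite minnn; lia.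
  apply: contra neJ => /eqP cardJP.
  rewrite eqEcard card_tprefix ?cardJ ?leqnn ?(ltnW lt_kn) // andbT.
  by apply: setI_card_subset; rewrite cardJ -[k in k <= _]cardJP.
have sub : bumped_interval k t \subset tprefix t m.
  apply/subsetP => x; rewrite in_bumped in_tprefix.
  by case: eqP => [->|]; rewrite ?tkey_shift; lia.
by rewrite /tcount (setIidPl sub) card_bumped; apply: leq_trans le_J (geq_minr _ _).
Qed.

End BumpedInterval.

Section SparsePavingPositroid.
Variables (n k : nat) (I : 'I_n -> {set 'I_n}).
Hypotheses (necklaceI : grassmann_necklace k I) (k_ge2 : 2 <= k) (k_le : k <= n - 2).
Implicit Types (i j p t : 'I_n) (J X : {set 'I_n}).

Local Notation Bs := (positroid_bases k I).

Let k_gt0 : 0 < k. Proof. lia. Qed.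
Let lt_kn : k < n. Proof. lia. Qed.
Let le_kn : k <= n. Proof. lia. Qed.
Let card_I i : #|I i| = k. Proof. by case: necklaceI => ->. Qed.
Let card_B J : J \in Bs -> #|J| = k. Proof. exact: card_positroid_basis. Qed.
Let Bs_neq0 : Bs != set0. Proof. exact/positroid_bases_neq0/(ltn_trans k_gt0). Qed.

Lemma bumped_csucc_neq p :
  I p = bumped_interval k p -> I (csucc p) != bumped_interval k (csucc p).
Proof.
move=> Ip; have pk_next : shift p k \in I (csucc p).
  apply: (necklace_mem_shift necklaceI (e := 1)).
    by rewrite Ip in_bumped // eqxx orbT.
  by move=> d; rewrite ltnS leqn0 => /eqP ->; rewrite shift_eq; lia.
apply: contraTneq pk_next => ->.
have -> : shift p k = shift (csucc p) (k - 1) by rewrite /csucc shift_add; congr shift; lia.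
by rewrite in_bumped // tkey_shift ?shift_eq; lia.
Qed.

Section SparsePaving.
Hypothesis sparseB : sparse_paving Bs.

Lemma bumped_of_sparse_paving t : I t != cyc_int k t -> I t = bumped_interval k t.
Proof.
have [indep_small spanning_large] := proj1 (sparse_pavingE card_B Bs_neq0) sparseB.
have le_count b m : b \in Bs -> tcount t b m <= tcount t (I t) m.
  by case/(positroid_basesP necklaceI) => _; apply.
rewrite cyc_int_tprefix // => neIt.
have sPI : tprefix t (k - 1) \subset I t.
  have /indepP[b bB sPb] : indep Bs (tprefix t (k - 1)).
    by apply: indep_small; rewrite card_tprefix; lia.
  have := le_count _ (k - 1) bB.
  by rewrite /tcount (setIidPr sPb) setIC => /setI_card_subset.
have kI : shift t k \in I t.
  have /spanningP[b bB sbP] : spanning Bs (tprefix t k.+1).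
    by apply: spanning_large; rewrite card_tprefix.
  have := le_count _ k.+1 bB; rewrite /tcount (setIidPl sbP) card_B // -{1}(card_I t).
  move=> /setI_card_subset sIP.
  have /subsetPn[x xI xNP] : ~~ (I t \subset tprefix t k).
    by apply: contra neIt => sIP'; rewrite eqEcard sIP' card_tprefix // card_I leqnn.
  have key_x : tkey t x = k by move: (subsetP sIP x xI) xNP; rewrite !in_tprefix; lia.
  by rewrite -key_x tkeyK.
apply/esym/eqP; rewrite eqEcard card_bumped // card_I leqnn andbT.
apply/subsetP => x; rewrite in_bumped // => /orP[lt_x | /eqP -> //].
by apply: (subsetP sPI); rewrite in_tprefix.
Qed.

Lemma necklace_condition_of_sparse_paving : necklace_condition k I.
Proof.
move=> i neIi; have Ii := bumped_of_sparse_paving neIi.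
split=> //; apply/eqP; apply: contraT => neI.
- by have := bumped_csucc_neq (bumped_of_sparse_paving neI); rewrite csucc_cpred Ii eqxx.
- by have := bumped_csucc_neq Ii; rewrite (bumped_of_sparse_paving neI) eqxx.
Qed.

End SparsePaving.

Section NecklaceCondition.
Hypothesis condI : necklace_condition k I.

Lemma positroid_basesE J :
  (J \in Bs) = (#|J| == k) && [forall i, (I i != cyc_int k i) ==> (J != cyc_int k i)].
Proof.
apply/idP/andP => [JB | [/eqP cardJ /forall_inP nonbumped]].
  have [cardJ le_count] := proj1 (positroid_basesP necklaceI J) JB.
  split; first by rewrite cardJ.
  apply/forall_inP => i neIi; apply: contraTneq (le_count i k) => ->.
  case: (condI neIi) => _ _ ->.
  by rewrite -ltnNge cyc_int_tprefix // tcount_tprefix // minnn tcount_bumped_lt.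
apply/(positroid_basesP necklaceI); split=> // t m.
have [-> | neIt] := eqVneq (I t) (cyc_int k t).
  by rewrite cyc_int_tprefix // tcount_tprefix // -cardJ tcount_leq_min.
case: (condI neIt) => _ _ ->; apply: tcount_bumped_max => //.
by rewrite -cyc_int_tprefix //; apply: nonbumped.
Qed.

Lemma nonbasisP X : #|X| = k ->
  reflect (exists i, I i != cyc_int k i /\ X = cyc_int k i) (X \notin Bs).
Proof.
move=> cardX; rewrite positroid_basesE cardX eqxx /=.
apply: (iffP forall_inPn) => [[i neIi /negPn/eqP ->] | [i [neIi ->]]]; first by exists i.
by exists i; rewrite ?negbK.
Qed.

Lemma card_cyc_int_meet i j : i != j -> I i != cyc_int k i -> I j != cyc_int k j ->
  #|cyc_int k i :&: cyc_int k j| <= k - 2.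
Proof.
move=> neij neIi neIj; rewrite !cyc_int_tprefix //; apply: card_tprefix_meet; first lia.
have csucc_ne l l' : I l != cyc_int k l -> I l' != cyc_int k l' -> l' != csucc l.
  by move=> neIl; apply: contraNneq => ->; case: (condI neIl) => _ -> _.
have key_j := tkeyK i j; have := tkey_lt i j.
have : tkey i j != 0 by apply: (contra_neq _ neij) => key0; rewrite -key_j key0 shift0.
have : tkey i j != 1.
  by apply: (contra_neq _ (csucc_ne _ _ neIi neIj)) => key1; rewrite -key_j key1.
have : tkey i j != n - 1.
  apply: (contra_neq _ (csucc_ne _ _ neIj neIi)) => keyn.
  by rewrite -key_j keyn /csucc shift_add subnK ?shiftn //; lia.
lia.
Qed.

Lemma sparse_paving_of_necklace_condition : sparse_paving Bs.
Proof.
apply: (sparse_paving_of_nonbases_far card_B Bs_neq0) => // X Y cardX cardY.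
move=> /(nonbasisP cardX)[i [neIi ->]] /(nonbasisP cardY)[j [neIj ->]] neXY.
have neij : i != j by apply: contraNneq neXY => ->.
by apply: leq_ltn_trans (card_cyc_int_meet neij neIi neIj) _; lia.
Qed.

Lemma positroid_circuit_hyperplaneE X :
  circuit_hyperplane Bs X <-> exists i, I i != cyc_int k i /\ X = cyc_int k i.
Proof.
have [small large] :=
  proj1 (sparse_pavingE card_B Bs_neq0) sparse_paving_of_necklace_condition.
rewrite (circuit_hyperplaneE card_B Bs_neq0 k_gt0 small large).
split=> [[cardX /(nonbasisP cardX)] // | [i [neIi ->]]].
have card_cyc : #|cyc_int k i| = k by rewrite cyc_int_tprefix // card_tprefix.
by split=> //; apply/nonbasisP => //; exists i.
Qed.

End NecklaceCondition.
End SparsePavingPositroid.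

Unset Implicit Arguments.

Theorem theorem3p2 (n k : nat) (I : 'I_n -> {set 'I_n}) :
  2 <= k -> k <= n - 2 -> grassmann_necklace k I ->
  (sparse_paving (positroid_bases k I) <->
     (forall i : 'I_n, I i != cyc_int k i ->
        [/\ I (cpred i) = cyc_int k (cpred i),
            I (csucc i) = cyc_int k (csucc i) &
            I i = (cyc_int k i :\ shift i (k - 1)) :|: [set shift i k]]))
  /\
  (sparse_paving (positroid_bases k I) ->
     forall X : {set 'I_n},
       circuit_hyperplane (positroid_bases k I) X <->
       exists i : 'I_n, I i != cyc_int k i /\ X = cyc_int k i).
Proof.
move=> k_ge2 k_le necklaceI.
have sparse_cond := necklace_condition_of_sparse_paving necklaceI k_ge2 k_le.
split; first split=> [|condI]; first exact: sparse_cond.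
  exact: sparse_paving_of_necklace_condition.
by move=> /sparse_cond condI X; apply: positroid_circuit_hyperplaneE.
Qed.
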